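(* Consider any realization of a run of Algorithm 4 (described in the context) under the standing assumption. For every $k\in\mathcal{K}$, if $k\in\mathcal{U}$ then $\delta_k>3(1-\eta)\epsilon_H/(2L_H)$. Consequently, for every realization, \[ \delta_k\ \ge\ \bar\delta_{\min}:=\min\Big\{\delta_0,\ \tfrac{3\gamma_1(1-\eta)}{2L_H}\epsilon_H\Big\}\in(0,\infty)\quad\text{for all }k\in\mathcal{K}. \]
   Context: Let $f:\mathbb{R}^n\to\mathbb{R}$ with gradient $g=\nabla f$ and Hessian $H=\nabla^2f$; $\|\cdot\|$ is the Euclidean norm, $\lambda_{\min}$ the smallest eigenvalue, $\mathbb{S}^n$ the real symmetric $n\times n$ matrices. Write $f_k=f(x_k)$, $g_k=g(x_k)$, $H_k=H(x_k)$, $m_k(x)=f_k+g_k^T(x-x_k)+\tfrac12(x-x_k)^TH_k(x-x_k)$. Exact arithmetic is assumed. Algorithm 2 (truncated CG; inputs nonzero $g$, $H\in\mathbb{S}^n$, $\epsilon>0$, $\delta>0$, $\zeta\in(0,1)$, flag capCG, and $M\ge\|H\|$): $k_{\max}=\min\{n,\tfrac12\sqrt{\kappa}\ln(4\kappa^{3/2}/\zeta)\}$ with $\kappa=(M+2\epsilon)/\epsilon$ if capCG is true, else $k_{\max}=n$. Set $y_0=0,r_0=g,p_0=-g,j=0$. While $j<k_{\max}$: if $p_j^T(H+2\epsilon I)p_j\le\epsilon\|p_j\|^2$, return $s=y_j+\sigma p_j$ with $\sigma\ge0$, $\|s\|=\delta$, flag BND-NEG; set $\alpha_j=\|r_j\|^2/(p_j^T(H+2\epsilon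 I)p_j)$, $y_{j+1}=y_j+\alpha_jp_j$; if $\|y_{j+1}\|\ge\delta$, return $s=y_j+\sigma p_j$ with $\sigma\ge0$, $\|s\|=\delta$, flag BND-NORM; set $r_{j+1}=r_j+\alpha_j(H+2\epsilon I)p_j$; if $\|r_{j+1}\|\le\tfrac\zeta2\min\{\|g\|,\epsilon\|y_{j+1}\|\}$, return $s=y_{j+1}$, flag INT-RES; set $\beta_{j+1}=\|r_{j+1}\|^2/\|r_j\|^2$, $p_{j+1}=-r_{j+1}+\beta_{j+1}p_j$, $j\leftarrow j+1$. On loop exit return $s=y_j$, flag INT-MAX. Algorithm 3 (minimum eigenvalue oracle, MEO; inputs $g$, $H\in\mathbb{S}^n$, $\epsilon>0$, $\delta>0$, $\xi\in(0,1)$, $M\ge\|H\|$): a possibly randomized procedure that either returns $s=\pm\delta v$ with $\|v\|=1$, $v^THv\le-\epsilon/2$, satisfying $g^Ts\le0$, $s^THs\le-\tfrac12\epsilon\|s\|^2$, $\|s\|=\delta$, or returns an indication that $H\succeq-\epsilon I$. Algorithm 4 (inexact trust-region Newton-CG). Inputs: $\epsilon_g,\epsilon_H>0$; $\gamma_1\in(0,1)$, $\gamma_2\ge1$, $\psi\in(1/\gamma_2,1]$; $x_0$; $\delta_0>0$; $\delta_{\max}\ge\delta_0$; $\eta\in(0,1)$; $\zeta\in(0,1)$; $\xi\in[0,1)$; capCG; $M\ge L_g$. For $k=0,1,\dots$: evaluate $g_k,H_k$. If $g_k\ne0$, call Algorithm 2 with $(g_k,H_k,\epsilon_H,\delta_k,\zeta,\text{capCG},M)$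 obtaining $s_k^{CG}$ and flag outCG; else set $s_k^{CG}=0$, outCG$=$INT-RES. If outCG$\in\{$BND-NEG, BND-NORM$\}$ or ($\|g_k\|>\epsilon_g$ and outCG$=$INT-RES), set $s_k=s_k^{CG}$. Otherwise call Algorithm 3 with $(g_k,H_k,\epsilon_H,\delta_k,\xi,M)$; if it indicates $H_k\succeq-\epsilon_HI$, return $x_k$ (terminate), else take its output as $s_k$. Set $\rho_k=\frac{f_k-f(x_k+s_k)}{m_k(x_k)-m_k(x_k+s_k)}$. If $\rho_k\ge\eta$: $x_{k+1}=x_k+s_k$ and $\delta_{k+1}=\min\{\gamma_2\delta_k,\delta_{\max}\}$ if $\|s_k\|\ge\psi\delta_k$, else $\delta_{k+1}=\delta_k$. If $\rho_k<\eta$: $x_{k+1}=x_k$, $\delta_{k+1}=\gamma_1\|s_k\|$. $\mathcal{K}$ is the set of indices $k$ such that iteration $k$ is completed without termination (for the given realization); $\mathcal{U}=\{k\in\mathcal{K}:\rho_k<\eta\}$. Standing assumption: $\{f_k\}$ is bounded below by some $f_{\rm low}\in\mathbb{R}$, and all segments $[x_k,x_k+s_k]$ lie in an open set on which $f$ is twice continuously differentiable with gradient Lipschitz with constant $L_g>0$ and Hessian Lipschitz with constant $L_H>0$. *)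

From mathcomp Require Import all_boot all_order all_algebra.
Import Order.TTheory GRing.Theory Num.Theory.
From mathcomp Require Import all_classical all_reals all_analysis.
Set Implicit Arguments. Unset Strict Implicit. Unset Printing Implicit Defensive.
Local Open Scope ring_scope.
Local Open Scope classical_set_scope.

Section Defs.
Variable R : realType.
Variable n : nat.
Local Notation vec := 'cV[R]_n.
Local Notation mat := 'M[R]_n.

Definition dotv (u v : vec) : R := (u^T *m v) 0 0.
Definition enorm (u : vec) : R := Num.sqrt (dotv u u).

Definition quadf (A : mat) (p : vec) : R := dotv p (A *m p).

Inductive cg_flag := BND_NEG | BND_NORM | INT_RES | INT_MAX.
Definition cg_flag_eqb (a b : cg_flag) : bool :=
  match a, b with
  | BND_NEG, BND_NEG | BND_NORM, BND_NORM | INT_RES, INT_RES | INT_MAX, INT_MAX => true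
  | _, _ => false end.

(** k_max of Algorithm 2 (a real number; the loop runs while j < k_max). *)
Definition cg_kmax (eps zeta : R) (capCG : bool) (M : R) : R :=
  if capCG then
    let kappa := (M + 2 * eps) / eps in
    Num.min (n%:R) (2^-1 * Num.sqrt kappa * ln (4 * (kappa * Num.sqrt kappa) / zeta))
  else n%:R.

(** Algorithm 2 (truncated CG), in exact arithmetic, as a relation between its
    inputs and its possible outputs (s, flag).  J is the index j at which the
    algorithm returns; y, r, p are the CG iterates. *)
Definition trunc_CG (g : vec) (H : mat) (eps delta zeta : R) (capCG : bool)
    (M : R) (s : vec) (flag : cg_flag) : Prop :=
  let Hb := H + (2 * eps)%:M in
  let kmax := cg_kmax eps zeta capCG M in
  exists (J : nat) (y r p : nat -> vec),
    [/\ y 0%N = 0, r 0%N = g, p 0%N = - g,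
     (forall j : nat, (j < J)%N ->
        let alpha := enorm (r j) ^+ 2 / quadf Hb (p j) in
        [/\ j%:R < kmax,
            ~ (quadf Hb (p j) <= eps * enorm (p j) ^+ 2),
            y j.+1 = y j + alpha *: p j,
            ~ (enorm (y j.+1) >= delta) &
          [/\ r j.+1 = r j + alpha *: (Hb *m p j),
            ~ (enorm (r j.+1) <= zeta / 2 * Num.min (enorm g) (eps * enorm (y j.+1))) &
            p j.+1 = - r j.+1 + (enorm (r j.+1) ^+ 2 / enorm (r j) ^+ 2) *: p j]])
     &
     (let alpha := enorm (r J) ^+ 2 / quadf Hb (p J) in
     let yJ1 := y J + alpha *: p J in
     let rJ1 := r J + alpha *: (Hb *m p J) in
     [\/ [/\ J%:R < kmax, quadf Hb (p J) <= eps * enorm (p J) ^+ 2, flag = BND_NEG &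
             (exists2 sigma : R, 0 <= sigma & s = y J + sigma *: p J /\ enorm s = delta)],
         [/\ J%:R < kmax, ~ (quadf Hb (p J) <= eps * enorm (p J) ^+ 2),
             enorm yJ1 >= delta, flag = BND_NORM &
             (exists2 sigma : R, 0 <= sigma & s = y J + sigma *: p J /\ enorm s = delta)],
         [/\ J%:R < kmax, ~ (quadf Hb (p J) <= eps * enorm (p J) ^+ 2),
             ~ (enorm yJ1 >= delta) &
            [/\ enorm rJ1 <= zeta / 2 * Num.min (enorm g) (eps * enorm yJ1),
             flag = INT_RES & s = yJ1]] |
         [/\ ~ (J%:R < kmax), flag = INT_MAX & s = y J]])].

(** Algorithm 3 (minimum eigenvalue oracle), possibly randomized: for a given
    realization its output is either [Some s] with the stated properties, or
    [None], meaning it indicates H >= -eps I (the indication may be wrong,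
    with some probability, for a randomized oracle). *)
Definition MEO_output (g : vec) (H : mat) (eps delta : R) (out : option vec) : Prop :=
  match out with
  | Some s => exists v : vec, [/\ enorm v = 1, quadf H v <= - eps / 2,
                 (s = delta *: v \/ s = - (delta *: v)),
                 dotv g s <= 0 &
                 [/\ quadf H s <= - (2^-1 * eps * enorm s ^+ 2) & enorm s = delta]]
  | None => True
  end.

Definition model (fk : R) (gk : vec) (Hk : mat) (s : vec) : R :=
  fk + dotv gk s + 2^-1 * quadf Hk s.

(** Data of one realization of Algorithm 4.  For iteration k:
    x k, delta k : iterate and radius;  sCG k, outCG k : result of the CG step;
    meo k : output of the MEO (only meaningful when it is called);
    s k : the trial step. *)
Record run_data := RunData {
  rx : nat -> vec; rdelta : nat -> R;
  rsCG : nat -> vec; routCG : nat -> cg_flag;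
  rmeo : nat -> option vec; rs : nat -> vec }.

Section Algo4.
Variables (f : vec -> R) (grad : vec -> vec) (hess : vec -> mat).
Variables (eps_g eps_H gamma1 gamma2 psi delta0 delta_max eta zeta xi : R).
Variables (capCG : bool) (M : R).
Variable D : run_data.

Definition use_CG (k : nat) : bool :=
  [|| cg_flag_eqb (routCG D k) BND_NEG, cg_flag_eqb (routCG D k) BND_NORM
    | (eps_g < enorm (grad (rx D k))) && cg_flag_eqb (routCG D k) INT_RES].

Definition terminates (k : nat) : bool := ~~ use_CG k && (rmeo D k == None).

Definition reached (k : nat) : Prop := forall j : nat, (j < k)%N -> ~~ terminates j.

Definition in_K (k : nat) : Prop := reached k /\ ~~ terminates k.

Definition rho (k : nat) : R :=
  let xk := rx D k in let sk := rs D k in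
  (f xk - f (xk + sk)) /
  (model (f xk) (grad xk) (hess xk) 0 - model (f xk) (grad xk) (hess xk) sk).

Definition in_U (k : nat) : Prop := in_K k /\ rho k < eta.

Definition iteration_spec (k : nat) : Prop :=
  let xk := rx D k in let gk := grad xk in let Hk := hess xk in
  let dk := rdelta D k in
  [/\ (gk != 0 -> trunc_CG gk Hk eps_H dk zeta capCG M (rsCG D k) (routCG D k)),
      (gk = 0 -> rsCG D k = 0 /\ routCG D k = INT_RES),
      (use_CG k -> rs D k = rsCG D k),
      (~~ use_CG k -> MEO_output gk Hk eps_H dk (rmeo D k) /\
                      forall s, rmeo D k = Some s -> rs D k = s) &
      (~~ terminates k ->
        (eta <= rho k ->
           rx D k.+1 = xk + rs D k /\
           rdelta D k.+1 = (if psi * dk <= enorm (rs D k)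
                            then Num.min (gamma2 * dk) delta_max else dk)) /\
        (rho k < eta ->
           rx D k.+1 = xk /\ rdelta D k.+1 = gamma1 * enorm (rs D k)))].

Definition algo4_run (x0 : vec) : Prop :=
  [/\ rx D 0%N = x0, rdelta D 0%N = delta0 &
      forall k, reached k -> iteration_spec k].

End Algo4.

Local Notation nvec := ('cV[R]_n : normedModType R).
Local Notation nmat := ('M[R]_n : normedModType R).

Definition C2_Lipschitz_on (S : set vec) (f : vec -> R) (grad : vec -> vec)
    (hess : vec -> mat) (L_g L_H : R) : Prop :=
  let f' : nvec -> R := f in
  let grad' : nvec -> nvec := grad in
  let hess' : nvec -> nmat := hess in
  [/\ open (S : set nvec),
      (forall x : nvec, S x -> differentiable f' x /\ forall v, 'd f' x v = dotv (grad x) v),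
      (forall x : nvec, S x -> differentiable grad' x /\ forall v, 'd grad' x v = hess x *m v),
      (forall x : nvec, S x -> hess' y @[y --> x] --> hess' x) &
     [/\ (forall x y, S x -> S y -> enorm (grad x - grad y) <= L_g * enorm (x - y)) &
      (forall x y, S x -> S y -> forall v,
          enorm ((hess x - hess y) *m v) <= L_H * enorm (x - y) * enorm v)]].

End Defs.

(* Each step s_k that Algorithm 4 tries satisfies ||s_k|| <= delta_k and
   decreases the quadratic model by pred_k >= eps_H/4 ||s_k||^2.  For an MEO step
   this is its negative curvature; for a CG step it comes from the classical CG
   invariants for H + 2 eps_H I (residual r_j = g + (H + 2 eps_H I) y_j,
   conjugate directions, y_j.p_j >= 0 and a nonincreasing model along the
   iterates), together with the step-length rules of the BND-NEG and BND-NORM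
   exits.  Because the Hessian is Lipschitz, hence symmetric, Taylor's formula
   gives pred_k - ared_k <= L_H ||s_k||^3 / 6, so a rejected step (rho_k < eta)
   has ||s_k|| > 3 (1 - eta) eps_H / (2 L_H).  A rejection sets
   delta_(k+1) = gamma1 ||s_k|| and an acceptance never makes the radius smaller
   than min(delta_k, delta_max), which gives delta_k >= delta_min by induction. *)

From mathcomp Require Import all_boot all_order all_algebra.
Import Order.TTheory GRing.Theory Num.Theory.
From mathcomp Require Import all_classical all_reals all_analysis.
From mathcomp Require Import ring lra.
Import numFieldNormedType.Exports.
Local Open Scope ring_scope.
Local Open Scope classical_set_scope.

Set Implicit Arguments.
Unset Strict Implicit.
Unset Printing Implicit Defensive.

Section Euclidean.
Variables (R : realType) (n : nat).
Implicit Types (u v w : 'cV[R]_n) (A : 'M[R]_n).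

Lemma dotvE u v : dotv u v = \sum_i u i 0 * v i 0.
Proof. by rewrite /dotv !mxE; apply: eq_bigr => i _; rewrite mxE. Qed.

Lemma dotvC u v : dotv u v = dotv v u.
Proof. by rewrite !dotvE; apply: eq_bigr => i _; rewrite mulrC. Qed.

Lemma dotvDr u v w : dotv u (v + w) = dotv u v + dotv u w.
Proof. by rewrite /dotv mulmxDr mxE. Qed.

Lemma dotvDl u v w : dotv (v + w) u = dotv v u + dotv w u.
Proof. by rewrite dotvC dotvDr !(dotvC u). Qed.

Lemma dotvZr u v a : dotv u (a *: v) = a * dotv u v.
Proof. by rewrite /dotv -scalemxAr mxE. Qed.

Lemma dotvZl u v a : dotv (a *: v) u = a * dotv v u.
Proof. by rewrite dotvC dotvZr dotvC. Qed.

Lemma dotvNr u v : dotv u (- v) = - dotv u v.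
Proof. by rewrite -scaleN1r dotvZr mulN1r. Qed.

Lemma dotvNl u v : dotv (- v) u = - dotv v u.
Proof. by rewrite dotvC dotvNr dotvC. Qed.

Lemma dotv0r u : dotv u 0 = 0.
Proof. by rewrite /dotv mulmx0 mxE. Qed.

Lemma dotv0l u : dotv 0 u = 0.
Proof. by rewrite dotvC dotv0r. Qed.

Lemma dotvv_ge0 u : 0 <= dotv u u.
Proof. by rewrite dotvE sumr_ge0 // => i _; rewrite -expr2 sqr_ge0. Qed.

Lemma dotvv_eq0 u : (dotv u u == 0) = (u == 0).
Proof.
apply/idP/eqP => [|->]; last by rewrite dotv0r.
rewrite dotvE psumr_eq0 => [/allP u0|i _]; last by rewrite -expr2 sqr_ge0.
apply/matrixP => i j; rewrite (ord1 j) mxE.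
by have := u0 i (mem_index_enum i); rewrite -expr2 sqrf_eq0 => /eqP.
Qed.

Lemma dotvv_gt0 u : (0 < dotv u u) = (u != 0).
Proof. by rewrite lt_def dotvv_eq0 dotvv_ge0 andbT. Qed.

Lemma sqr_enorm u : enorm u ^+ 2 = dotv u u.
Proof. by rewrite sqr_sqrtr // dotvv_ge0. Qed.

Lemma enorm_ge0 u : 0 <= enorm u.
Proof. exact: sqrtr_ge0. Qed.

Lemma enorm_eq0 u : (enorm u == 0) = (u == 0).
Proof. by rewrite -dotvv_eq0 /enorm sqrtr_eq0 eq_le dotvv_ge0 andbT. Qed.

Lemma enorm0 : enorm (0 : 'cV[R]_n) = 0.
Proof. by apply/eqP; rewrite enorm_eq0. Qed.

Lemma enormZ u a : enorm (a *: u) = `|a| * enorm u.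
Proof.
by rewrite /enorm dotvZl dotvZr mulrA -expr2 sqrtrM ?sqr_ge0 // sqrtr_sqr.
Qed.

Lemma ler_norm_dotv u v : `|dotv u v| <= enorm u * enorm v.
Proof.
have [->|v0] := eqVneq v 0; first by rewrite dotv0r normr0 enorm0 mulr0.
set a := dotv v v; set c := dotv u v.
have a_gt0 : 0 < a by rewrite dotvv_gt0.
have := dotvv_ge0 (a *: u - c *: v).
rewrite !(dotvDl, dotvDr, dotvNl, dotvNr, dotvZl, dotvZr) (dotvC v u) -/a -/c.
move=> disc; have cab : c ^+ 2 <= dotv u u * a by nra.
by rewrite -sqrtr_sqr -sqrtrM ?dotvv_ge0 // ler_sqrt // mulr_ge0 // dotvv_ge0.
Qed.

Definition self_adjoint A := forall u v, dotv u (A *m v) = dotv v (A *m u).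

Lemma self_adjoint_shift A a : self_adjoint A -> self_adjoint (A + a%:M).
Proof.
move=> symA u v; rewrite !mulmxDl !mul_scalar_mx !dotvDr !dotvZr.
by rewrite symA (dotvC u v).
Qed.

Definition qmodel (g : 'cV[R]_n) A u := dotv g u + 2^-1 * quadf A u.

Lemma qmodel0 g A : qmodel g A 0 = 0.
Proof. by rewrite /qmodel /quadf mulmx0 !dotv0r mulr0 addr0. Qed.

Lemma qmodel_shift g A a u :
  qmodel g (A + a%:M) u = qmodel g A u + a / 2 * dotv u u.
Proof. by rewrite /qmodel /quadf mulmxDl mul_scalar_mx dotvDr dotvZr; ring. Qed.

Lemma qmodel_line g A u v t : self_adjoint A ->
  qmodel g A (u + t *: v) =
  qmodel g A u + t * dotv v (g + A *m u) + t ^+ 2 / 2 * quadf A v.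
Proof.
move=> symA; rewrite /qmodel /quadf mulmxDr -scalemxAr.
by rewrite !(dotvDl, dotvDr, dotvZl, dotvZr) (symA v u) (dotvC g v); field.
Qed.

Lemma model_decreaseE (fk : R) g A u :
  model fk g A 0 - model fk g A u = - qmodel g A u.
Proof. by rewrite /model /qmodel /quadf mulmx0 !dotv0r mulr0 !addr0; ring. Qed.

End Euclidean.

Section ConjugateGradient.
Variables (R : realType) (n : nat).
Variables (g : 'cV[R]_n) (A : 'M[R]_n) (y r p : nat -> 'cV[R]_n) (J : nat).
Hypothesis symA : self_adjoint A.
Hypotheses (y0 : y 0 = 0) (r0 : r 0 = g) (p0 : p 0 = - g).
Hypothesis curv_gt0 : forall j, (j < J)%N -> 0 < quadf A (p j).
Hypothesis y_next : forall j, (j < J)%N ->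
  y j.+1 = y j + (dotv (r j) (r j) / quadf A (p j)) *: p j.
Hypothesis r_next : forall j, (j < J)%N ->
  r j.+1 = r j + (dotv (r j) (r j) / quadf A (p j)) *: (A *m p j).
Hypothesis p_next : forall j, (j < J)%N ->
  p j.+1 = - r j.+1 + (dotv (r j.+1) (r j.+1) / dotv (r j) (r j)) *: p j.
Hypothesis r_neq0 : forall j, (j <= J)%N -> r j != 0.

Local Notation alpha j := (dotv (r j) (r j) / quadf A (p j)).
Local Notation beta j := (dotv (r j.+1) (r j.+1) / dotv (r j) (r j)).

Lemma cg_alpha_gt0 j : (j < J)%N -> 0 < alpha j.
Proof. by move=> jJ; rewrite divr_gt0 ?curv_gt0 // dotvv_gt0 r_neq0 // ltnW. Qed.

Lemma cg_alpha_curv j : (j < J)%N -> alpha j * quadf A (p j) = dotv (r j) (r j).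
Proof. by move=> jJ; rewrite divfK // gt_eqF // curv_gt0. Qed.

Lemma cg_res_incr j w : (j < J)%N ->
  alpha j * dotv w (A *m p j) = dotv w (r j.+1) - dotv w (r j).
Proof. by move=> jJ; rewrite r_next // dotvDr dotvZr addrAC subrr add0r. Qed.

Lemma cg_res j : (j <= J)%N -> r j = g + A *m y j.
Proof.
elim: j => [_|j IH jJ]; first by rewrite y0 mulmx0 addr0 r0.
by rewrite r_next // y_next // IH 1?ltnW // mulmxDr -scalemxAr addrA.
Qed.

Lemma cg_dir_res j : (j <= J)%N -> dotv (p j) (r j) = - dotv (r j) (r j).
Proof.
elim: j => [_|j IH jJ]; first by rewrite p0 r0 dotvNl.
have pr_next : dotv (p j) (r j.+1) = 0.
  rewrite r_next // dotvDr dotvZr -/(quadf A (p j)) cg_alpha_curv //.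
  by rewrite IH 1?ltnW // addNr.
by rewrite p_next // dotvDl dotvNl dotvZl pr_next mulr0 addr0.
Qed.

Section Orthogonality.
Variable j : nat.
Hypothesis jJ : (j < J)%N.
Hypothesis orth : forall i, (i < j)%N ->
  dotv (r i) (r j) = 0 /\ dotv (p i) (A *m p j) = 0.

Lemma cg_res_conj i : (i <= j)%N ->
  dotv (r i) (A *m p j) = if i == j then - quadf A (p j) else 0.
Proof.
have conj k : (k < j)%N -> dotv (p k) (A *m p j) = 0 by move=> /orth[].
case: i => [|i] ij.
  rewrite r0 -[g]opprK -p0 dotvNl.
  by case: eqP => [<- //|/eqP j0]; rewrite conj ?oppr0 // lt0n eq_sym.
have iJ : (i < J)%N := leq_ltn_trans (ltnW ij) jJ.
rewrite -[r i.+1]opprK -[- r i.+1](addrK (beta i *: p i)) -p_next // opprB.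
rewrite dotvDl dotvNl dotvZl conj // mulr0 add0r.
by case: eqP => [<- //|/eqP ij1]; rewrite conj ?oppr0 // ltn_neqAle ij1.
Qed.

Lemma cg_res_orth_next i : (i <= j)%N -> dotv (r i) (r j.+1) = 0.
Proof.
move=> ij; rewrite r_next // dotvDr dotvZr cg_res_conj //.
case: eqP => [->|/eqP ij1]; first by rewrite mulrN cg_alpha_curv // subrr.
by rewrite (orth (_ : i < j)%N).1 ?mulr0 ?addr0 // ltn_neqAle ij1.
Qed.

Lemma cg_conj_next i : (i <= j)%N -> dotv (p i) (A *m p j.+1) = 0.
Proof.
move=> ij; have iJ := leq_ltn_trans ij jJ.
have rAp : alpha i * dotv (r j.+1) (A *m p i) =
    if i == j then dotv (r j.+1) (r j.+1) else 0.
  rewrite cg_res_incr // (dotvC _ (r i)) cg_res_orth_next // subr0.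
  case: eqP => [-> //|/eqP ij1].
  by rewrite dotvC cg_res_orth_next // ltn_neqAle ij1 ij.
rewrite p_next // mulmxDr mulmxN -scalemxAr dotvDr dotvNr dotvZr.
rewrite (symA (p i) (r j.+1)).
case: eqP rAp => [-> rAp|/eqP ij1 /eqP]; last first.
  rewrite (orth (_ : i < j)%N).2 ?ltn_neqAle ?ij1 // mulr0 addr0.
  by rewrite mulf_eq0 gt_eqF ?cg_alpha_gt0 //= => /eqP ->; rewrite oppr0.
have a_gt0 := cg_alpha_gt0 jJ.
have -> : dotv (r j.+1) (A *m p j) = dotv (r j.+1) (r j.+1) / alpha j.
  by apply: (mulfI (lt0r_neq0 a_gt0)); rewrite rAp mulrCA divff ?mulr1 // gt_eqF.
rewrite -/(quadf A (p j)); field.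
by apply/andP; split; apply: lt0r_neq0;
  rewrite ?dotvv_gt0 ?r_neq0 ?curv_gt0 // ltnW.
Qed.

End Orthogonality.

Lemma cg_orth j : (j <= J)%N -> forall i, (i < j)%N ->
  dotv (r i) (r j) = 0 /\ dotv (p i) (A *m p j) = 0.
Proof.
elim: j => [//|j IH jJ i]; rewrite ltnS => ij.
have orth := IH (ltnW jJ).
by split; [exact: (cg_res_orth_next jJ orth) | exact: (cg_conj_next jJ orth)].
Qed.

Lemma cg_iter_conj j k : (j <= k)%N -> (k <= J)%N -> dotv (y j) (A *m p k) = 0.
Proof.
elim: j => [|j IH] jk kJ; first by rewrite y0 dotv0l.
have jJ : (j < J)%N := leq_trans jk kJ.
rewrite y_next // dotvDl dotvZl IH // 1?ltnW //.
by rewrite (cg_orth kJ jk).2 mulr0 addr0.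
Qed.

Lemma cg_iter_res j : (j <= J)%N -> dotv (y j) (r j) = 0.
Proof.
elim: j => [|j IH] jJ; first by rewrite y0 dotv0l.
have jJ' := ltnW jJ.
rewrite y_next // r_next // !(dotvDl, dotvDr, dotvZl, dotvZr) -/(quadf A (p j)).
rewrite IH // (cg_iter_conj (leqnn j) jJ') cg_dir_res // cg_alpha_curv //.
by rewrite mulrN addNr mulr0 !addr0.
Qed.

Lemma cg_iter_dir j : (j <= J)%N -> 0 <= dotv (y j) (p j).
Proof.
elim: j => [|j IH] jJ; first by rewrite y0 dotv0l.
rewrite p_next // dotvDr dotvNr cg_iter_res // oppr0 add0r dotvZr.
rewrite mulr_ge0 ?divr_ge0 ?dotvv_ge0 // y_next // dotvDl dotvZl.
by rewrite addr_ge0 ?IH 1?ltnW // mulr_ge0 ?dotvv_ge0 // ltW // cg_alpha_gt0.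
Qed.

Lemma cg_iter_qmodel j : (j <= J)%N -> qmodel g A (y j) <= 0.
Proof.
elim: j => [|j IH] jJ; first by rewrite y0 qmodel0.
have jJ' := ltnW jJ.
rewrite y_next // qmodel_line // -cg_res // cg_dir_res //.
have := cg_alpha_curv jJ; have := cg_alpha_gt0 jJ.
have := dotvv_ge0 (r j); have := IH jJ'.
set a := alpha j; set c := quadf A (p j); set rr := dotv (r j) (r j).
nra.
Qed.

Lemma cg_invariants j : (j <= J)%N ->
  [/\ r j = g + A *m y j, dotv (p j) (r j) = - dotv (r j) (r j),
      0 <= dotv (y j) (p j) & qmodel g A (y j) <= 0].
Proof.
by move=> jJ; split; [apply: cg_res | apply: cg_dir_res | apply: cg_iter_dir |
  apply: cg_iter_qmodel].
Qed.

End ConjugateGradient.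

Section SearchDirection.
Variables (R : realType) (n : nat).
Variables (g : 'cV[R]_n) (A : 'M[R]_n) (y p : 'cV[R]_n) (rr : R).
Hypothesis symA : self_adjoint A.
Hypothesis qmodel_y : qmodel g A y <= 0.
Hypothesis yp_ge0 : 0 <= dotv y p.
Hypothesis descent : dotv p (g + A *m y) = - rr.
Hypothesis rr_ge0 : 0 <= rr.

Lemma qmodel_dir (t : R) :
  qmodel g A (y + t *: p) = qmodel g A y - t * rr + t ^+ 2 / 2 * quadf A p.
Proof. by rewrite qmodel_line // descent mulrN. Qed.

Lemma sqr_enorm_dir (t : R) :
  enorm (y + t *: p) ^+ 2 =
  enorm y ^+ 2 + 2 * t * dotv y p + t ^+ 2 * enorm p ^+ 2.
Proof.
rewrite !sqr_enorm !(dotvDl, dotvDr, dotvZl, dotvZr) (dotvC p y); ring.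
Qed.

Lemma qmodel_neg_curv (eps t : R) : 0 <= eps -> 0 <= t ->
  quadf A p <= eps * enorm p ^+ 2 ->
  qmodel g A (y + t *: p) <= eps / 2 * enorm (y + t *: p) ^+ 2.
Proof.
move=> eps_ge0 t_ge0 neg; rewrite qmodel_dir sqr_enorm_dir.
have /(mulr_ge0 (sqr_ge0 t)) : 0 <= eps * enorm p ^+ 2 - quadf A p.
  by rewrite subr_ge0.
have := mulr_ge0 eps_ge0 (sqr_ge0 (enorm y)).
have := mulr_ge0 eps_ge0 (mulr_ge0 t_ge0 yp_ge0).
have := mulr_ge0 t_ge0 rr_ge0; have := qmodel_y; lra.
Qed.

Lemma qmodel_dir_le0 (t : R) : 0 < quadf A p -> 0 <= t ->
  enorm (y + t *: p) <= enorm (y + (rr / quadf A p) *: p) ->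
  qmodel g A (y + t *: p) <= 0.
Proof.
move=> c_gt0 t_ge0 le_norm; set a := rr / quadf A p in le_norm.
have a_ge0 : 0 <= a by rewrite divr_ge0 // ltW.
have ac : a * quadf A p = rr by rewrite divfK // gt_eqF.
have p_gt0 : 0 < enorm p ^+ 2.
  rewrite sqr_enorm dotvv_gt0; apply: contraTneq c_gt0 => ->.
  by rewrite /quadf mulmx0 dotv0r ltxx.
have t_le : t <= a.
  rewrite leNgt; apply/negP => a_lt.
  have := ler_pM (enorm_ge0 _) (enorm_ge0 _) le_norm le_norm.
  rewrite -!expr2 !sqr_enorm_dir.
  have /mulr_ge0/(_ yp_ge0) : 0 <= t - a by rewrite subr_ge0 ltW.
  have : 0 < (t - a) * (t + a) * enorm p ^+ 2.
    by apply: mulr_gt0 p_gt0; apply: mulr_gt0; lra.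
  lra.
have /(mulr_ge0 t_ge0) : 0 <= rr - t * quadf A p.
  by rewrite subr_ge0 -ac ler_pM2r.
rewrite qmodel_dir; have := mulr_ge0 t_ge0 rr_ge0; have := qmodel_y; lra.
Qed.

Lemma qmodel_cg_step : 0 < quadf A p -> 0 < rr ->
  qmodel g A (y + (rr / quadf A p) *: p) < 0.
Proof.
move=> c_gt0 rr_gt0; rewrite qmodel_dir.
have -> : (rr / quadf A p) ^+ 2 / 2 * quadf A p = rr / quadf A p * rr / 2.
  by field; rewrite gt_eqF.
have := divr_gt0 rr_gt0 c_gt0; have := qmodel_y; nra.
Qed.

End SearchDirection.

Section TruncatedCG.
Variables (R : realType) (n : nat).
Variables (g : 'cV[R]_n) (H : 'M[R]_n) (eps delta zeta : R).
Variables (capCG : bool) (M : R).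
Hypotheses (g_neq0 : g != 0) (symH : self_adjoint H).
Hypotheses (eps_gt0 : 0 < eps) (delta_gt0 : 0 < delta) (zeta_ge0 : 0 <= zeta).

Lemma trunc_CG_shifted_decrease s flag :
  trunc_CG g H eps delta zeta capCG M s flag -> flag <> INT_MAX ->
  [/\ enorm s <= delta, s != 0 &
      qmodel g (H + (2 * eps)%:M) s <= eps / 2 * enorm s ^+ 2].
Proof.
move=> [J [y [r [p [y0 r0 p0 iters ret]]]]] not_max.
set Hb := H + (2 * eps)%:M in iters ret *.
have symHb : self_adjoint Hb by apply: self_adjoint_shift.
have curv_pos j :
    ~ (quadf Hb (p j) <= eps * enorm (p j) ^+ 2) -> 0 < quadf Hb (p j).
  move=> /negP; rewrite -ltNge; apply: le_lt_trans.
  by rewrite mulr_ge0 ?sqr_ge0 // ltW.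
have curv_gt0 j : (j < J)%N -> 0 < quadf Hb (p j) by case/iters => _ /curv_pos.
have r_neq0 j : (j <= J)%N -> r j != 0.
  case: j => [_|j /iters[_ _ _ _ [_ /negP + _]]]; first by rewrite r0.
  rewrite -ltNge -enorm_eq0; apply: contraTneq => ->.
  rewrite -leNgt mulr_ge0 ?divr_ge0 // le_min enorm_ge0.
  by rewrite mulr_ge0 ?enorm_ge0 // ltW.
have y_next j : (j < J)%N ->
    y j.+1 = y j + (dotv (r j) (r j) / quadf Hb (p j)) *: p j.
  by case/iters => _ _; rewrite sqr_enorm.
have r_next j : (j < J)%N ->
    r j.+1 = r j + (dotv (r j) (r j) / quadf Hb (p j)) *: (Hb *m p j).
  by case/iters => _ _ _ _ []; rewrite sqr_enorm.
have p_next j : (j < J)%N ->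
    p j.+1 = - r j.+1 + (dotv (r j.+1) (r j.+1) / dotv (r j) (r j)) *: p j.
  by case/iters => _ _ _ _ [_ _]; rewrite !sqr_enorm.
have [resJ dirJ ypJ qJ] := cg_invariants symHb y0 r0 p0 curv_gt0 y_next r_next
  p_next r_neq0 (leqnn J).
have descent : dotv (p J) (g + Hb *m y J) = - dotv (r J) (r J).
  by rewrite -resJ dirJ.
have rr_gt0 : 0 < dotv (r J) (r J) by rewrite dotvv_gt0 r_neq0.
have sphere_neq0 t : enorm (y J + t *: p J) = delta -> y J + t *: p J != 0.
  by move=> nd; rewrite -enorm_eq0 nd gt_eqF.
have bound_ge0 (u : 'cV[R]_n) : 0 <= eps / 2 * enorm u ^+ 2.
  by rewrite mulr_ge0 ?sqr_ge0 // divr_ge0 // ltW.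
move: ret; rewrite /= [enorm (r J) ^+ 2]sqr_enorm.
case=> [[_ neg _ [t t_ge0 [-> nt]]] | [_ /curv_pos pos bnd _ [t t_ge0 [-> nt]]] |
        [_ /curv_pos pos /negP inside [_ _ ->]] | [_ ? _]] //.
- split; [by rewrite nt | exact: sphere_neq0 |].
  by apply: (qmodel_neg_curv (rr := dotv (r J) (r J))) => //; apply: ltW.
- split; [by rewrite nt | exact: sphere_neq0 |].
  rewrite -nt in bnd.
  have := qmodel_dir_le0 symHb qJ ypJ descent (ltW rr_gt0) pos t_ge0 bnd.
  by move/le_trans; apply; apply: bound_ge0.
- rewrite -ltNge in inside.
  have qlt := qmodel_cg_step symHb qJ descent pos rr_gt0.
  split; [exact: ltW | by apply: contraTneq qlt => ->; rewrite qmodel0 ltxx |].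
  exact: le_trans (ltW qlt) (bound_ge0 _).
Qed.

Lemma trunc_CG_decrease s flag :
  trunc_CG g H eps delta zeta capCG M s flag -> flag <> INT_MAX ->
  [/\ enorm s <= delta, s != 0 & eps / 2 * enorm s ^+ 2 <= - qmodel g H s].
Proof.
move=> /trunc_CG_shifted_decrease /[apply] -[s_le s_neq0].
by rewrite qmodel_shift -sqr_enorm; split=> //; lra.
Qed.

End TruncatedCG.

Section Taylor.
Variable R : realType.
Implicit Types (a b : R).

Lemma derive_nonpos_le (q q' : R -> R) a b : a <= b ->
  (forall u, a <= u <= b -> is_derive u 1 q (q' u)) ->
  (forall u, a <= u <= b -> q' u <= 0) -> q b <= q a.
Proof.
move=> ab dq q'_le0.
have dq_in u : u \in `]a, b[%R -> is_derive u 1 q (q' u).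
  by rewrite in_itv /= => /andP[au ub]; apply: dq; rewrite !ltW.
have q_derivable : {in `[a, b]%R, forall u, derivable q u 1}.
  by move=> u; rewrite in_itv /= => /dq [].
have [c] := MVT_segment ab dq_in (derivable_within_continuous q_derivable).
rewrite in_itv /= => cab qba.
by rewrite -subr_le0 qba mulr_le0_ge0 ?q'_le0 // subr_ge0.
Qed.

Lemma taylor1_le (p p1 : R -> R) (K v : R) :
  (forall u : R, 0 <= u <= 1 -> is_derive u 1 p (p1 u)) ->
  (forall u : R, 0 <= u <= 1 -> p1 u - p1 0 <= K * u) ->
  0 <= v <= 1 -> p v - p 0 - v * p1 0 <= K * v ^+ 2 / 2.
Proof.
move=> dp bound /andP[v0 v1].
have in01 u : 0 <= u <= v -> 0 <= u <= 1.
  by case/andP=> -> uv; rewrite (le_trans uv v1).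
pose q u := p u - p 0 - u * p1 0 - K * u ^+ 2 / 2.
have : q v <= q 0.
  apply: (derive_nonpos_le (q' := fun u => p1 u - p1 0 - K * u))
    => // u /in01 u01.
    have dpu := dp u u01; rewrite /q; apply: is_derive_eq.
    by rewrite /GRing.scale /= !(mulr0, mulr1, addr0, subr0); field.
  by rewrite subr_le0 bound.
by rewrite /q !expr0n /=; lra.
Qed.

Lemma taylor2_le (p p1 p2 : R -> R) (K : R) :
  (forall u : R, 0 <= u <= 1 -> is_derive u 1 p (p1 u)) ->
  (forall u : R, 0 <= u <= 1 -> is_derive u 1 p1 (p2 u)) ->
  (forall u : R, 0 <= u <= 1 -> p2 u - p2 0 <= K * u) ->
  p 1 - p 0 - p1 0 - p2 0 / 2 <= K / 6.
Proof.
move=> dp dp1 bound.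
pose q u := p u - p 0 - u * p1 0 - u ^+ 2 / 2 * p2 0 - K * u ^+ 3 / 6.
have : q 1 <= q 0.
  apply: (derive_nonpos_le
    (q' := fun u => p1 u - p1 0 - u * p2 0 - K * u ^+ 2 / 2)) => // u u01.
    have dpu := dp u u01; rewrite /q; apply: is_derive_eq.
    by rewrite /GRing.scale /= !(mulr0, mulr1, addr0, subr0); field.
  by rewrite subr_le0 (taylor1_le dp1).
by rewrite /q !expr0n !expr1n /=; lra.
Qed.

Lemma taylor1_abs (p p1 : R -> R) (K : R) :
  (forall u : R, 0 <= u <= 1 -> is_derive u 1 p (p1 u)) ->
  (forall u : R, 0 <= u <= 1 -> `|p1 u - p1 0| <= K * u) ->
  `|p 1 - p 0 - p1 0| <= K / 2.
Proof.
move=> dp bound; have o01 : 0 <= (1 : R) <= 1 by rewrite ler01 lexx.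
have boundN u : 0 <= u <= 1 -> - p1 u - - p1 0 <= K * u.
  move=> u01; have := bound u u01.
  by have := ler_norm (- (p1 u - p1 0)); rewrite normrN; lra.
have := taylor1_le dp (fun u u01 => le_trans (ler_norm _) (bound u u01)) o01.
have := taylor1_le (fun u u01 => is_deriveN (dp u u01)) boundN o01.
by rewrite ler_norml expr1n opprfctE; lra.
Qed.

Lemma taylor2_abs (p p1 p2 : R -> R) (K : R) :
  (forall u : R, 0 <= u <= 1 -> is_derive u 1 p (p1 u)) ->
  (forall u : R, 0 <= u <= 1 -> is_derive u 1 p1 (p2 u)) ->
  (forall u : R, 0 <= u <= 1 -> `|p2 u - p2 0| <= K * u) ->
  `|p 1 - p 0 - p1 0 - p2 0 / 2| <= K / 6.
Proof.
move=> dp dp1 bound.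
have boundN u : 0 <= u <= 1 -> - p2 u - - p2 0 <= K * u.
  move=> u01; have := bound u u01.
  by have := ler_norm (- (p2 u - p2 0)); rewrite normrN; lra.
have := taylor2_le dp dp1 (fun u u01 => le_trans (ler_norm _) (bound u u01)).
have := taylor2_le (fun u u01 => is_deriveN (dp u u01))
  (fun u u01 => is_deriveN (dp1 u u01)) boundN.
by rewrite ler_norml !opprfctE; lra.
Qed.

End Taylor.

Lemma is_derive_line (R : realType) (V W : normedModType R) (h : V -> W)
    (x s : V) (u : R) :
  differentiable h (x + u *: s) ->
  is_derive u 1 (fun t : R => h (x + t *: s)) ('d h (x + u *: s) s).
Proof.
move=> dh; pose l t : V := x + t *: s.
have dl : differentiable l u by apply: differentiableD.
have dl1 : 'd l u 1 = s.
  rewrite -deriveE // deriveD // ?derive_cst ?add0r; last exact: diff_derivable.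
  by rewrite deriveE ?diffZl // -deriveE // derive_id scale1r.
have dhl : differentiable (h \o l) u by apply: differentiable_comp.
have := derivableP (@diff_derivable _ _ _ _ _ (1 : R) dhl).
by rewrite deriveE // diff_comp //= dl1.
Qed.

Lemma is_derive_dotv (R : realType) (n : nat) (G : R -> 'cV[R]_n)
    (dG w : 'cV[R]_n) (t : R) :
  is_derive t 1 G dG -> is_derive t 1 (fun u => dotv (G u) w) (dotv dG w).
Proof.
move=> dGt; have [dG' _] := dGt.
have coord i : is_derive t 1 (fun u => G u i 0) (dG i 0).
  apply: DeriveDef; first exact: (derivable_mxP G t 1).1 dG' i 0.
  by move: (derive_mx dG'); rewrite derive_val => ->; rewrite mxE.
have -> : (fun u => dotv (G u) w) = \sum_(i < n) (w i 0 \*: (fun u => G u i 0)).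
  apply/funext => u; rewrite dotvE fct_sumE.
  by apply: eq_bigr => i _; rewrite /= mulrC.
rewrite dotvE (eq_bigr (fun i => w i 0 *: dG i 0)) => [|i _]; last first.
  by rewrite mulrC.
exact: is_derive_sum.
Qed.

Lemma eq0_of_small_bound (R : realFieldType) (D C e : R) : 0 < e ->
  (forall t, 0 < t -> t < e -> `|D| <= t * C) -> D = 0.
Proof.
move=> e_gt0 small; apply/normr0_eq0/le_anti; rewrite normr_ge0 andbT.
apply/ler_addgt0Pr => z z_gt0; rewrite add0r.
have C1_gt0 : 0 < `|C| + 1 by rewrite ltr_wpDl.
pose t := Num.min (e / 2) (z / (`|C| + 1)).
have t_gt0 : 0 < t by rewrite lt_min !divr_gt0.
have t_lt : t < e by rewrite gt_min; apply/orP; left; lra.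
have : t * (`|C| + 1) <= z by rewrite -ler_pdivlMr // ge_min lexx orbT.
have := ler_wpM2l (ltW t_gt0) (ler_norm C).
have := small t t_gt0 t_lt; nra.
Qed.

Definition segment_in (R : realType) (n : nat) (S : set 'cV[R]_n)
    (z d : 'cV[R]_n) :=
  forall t : R, 0 <= t <= 1 -> S (z + t *: d).

Lemma segment_in_start (R : realType) (n : nat) (S : set 'cV[R]_n)
    (z d : 'cV[R]_n) :
  segment_in S z d -> S z.
Proof. by move=> /(_ 0); rewrite lexx ler01 scale0r addr0; apply. Qed.

Section LipschitzHessian.
Variables (R : realType) (n : nat).
Variables (S : set 'cV[R]_n) (f : 'cV[R]_n -> R).
Variables (grad : 'cV[R]_n -> 'cV[R]_n) (hess : 'cV[R]_n -> 'M[R]_n) (Lg LH : R).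
Hypothesis C2 : C2_Lipschitz_on S f grad hess Lg LH.

Lemma is_derive_segment (z d w : 'cV[R]_n) (t : R) : S (z + t *: d) ->
  is_derive t 1 (fun u => f (z + u *: d)) (dotv (grad (z + t *: d)) d) /\
  is_derive t 1 (fun u => dotv (grad (z + u *: d)) w)
    (dotv (hess (z + t *: d) *m d) w).
Proof.
move=> Sz; case: C2 => _ df dgrad _ _.
have [df_z dfE] := df _ Sz; have [dgrad_z dgradE] := dgrad _ Sz.
split; first by rewrite -dfE; apply: is_derive_line.
by apply: is_derive_dotv; rewrite -dgradE; apply: is_derive_line.
Qed.

Lemma hess_lipschitz_dotv (x y d w : 'cV[R]_n) : S x -> S y ->
  `|dotv ((hess x - hess y) *m d) w| <= LH * enorm (x - y) * enorm d * enorm w.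
Proof.
move=> Sx Sy; case: C2 => _ _ _ _ [_ hess_lip].
apply: le_trans (ler_norm_dotv _ _) _.
by rewrite ler_wpM2r ?enorm_ge0 ?hess_lip.
Qed.

Lemma enorm_segment (z d : 'cV[R]_n) (u : R) : 0 <= u ->
  enorm (z + u *: d - z) = u * enorm d.
Proof. by move=> u_ge0; rewrite addrC addKr enormZ ger0_norm. Qed.

Lemma taylor_segment (z d : 'cV[R]_n) : segment_in S z d ->
  `|f (z + d) - f z - dotv (grad z) d - quadf (hess z) d / 2| <=
  LH * enorm d ^+ 3 / 6.
Proof.
move=> Sseg; have Sz := segment_in_start Sseg.
have := @taylor2_abs R (fun u => f (z + u *: d))
  (fun u => dotv (grad (z + u *: d)) d) (fun u => dotv (hess (z + u *: d) *m d) d)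
  (LH * enorm d ^+ 3).
rewrite /= scale1r scale0r addr0 /quadf (dotvC d); apply.
- by move=> u /Sseg/(is_derive_segment d)[].
- by move=> u /Sseg/(is_derive_segment d)[].
- move=> u /[dup] /Sseg Su /andP[u_ge0 _].
  rewrite -dotvNl -dotvDl -mulNmx -mulmxDl.
  apply: le_trans (hess_lipschitz_dotv d d Su Sz) _.
  by rewrite enorm_segment //; lra.
Qed.

Lemma grad_segment (z d w : 'cV[R]_n) : segment_in S z d ->
  `|dotv (grad (z + d)) w - dotv (grad z) w - dotv (hess z *m d) w| <=
  LH * enorm d ^+ 2 * enorm w / 2.
Proof.
move=> Sseg; have Sz := segment_in_start Sseg.
have := @taylor1_abs R (fun u => dotv (grad (z + u *: d)) w)
  (fun u => dotv (hess (z + u *: d) *m d) w) (LH * enorm d ^+ 2 * enorm w).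
rewrite /= scale1r scale0r addr0; apply.
- by move=> u /Sseg/(is_derive_segment w)[].
- move=> u /[dup] /Sseg Su /andP[u_ge0 _].
  rewrite -dotvNl -dotvDl -mulNmx -mulmxDl.
  apply: le_trans (hess_lipschitz_dotv d w Su Sz) _.
  by rewrite enorm_segment //; lra.
Qed.

Lemma quadf_lipschitz (x y d : 'cV[R]_n) : S x -> S y ->
  `|quadf (hess x) d - quadf (hess y) d| <= LH * enorm (x - y) * enorm d ^+ 2.
Proof.
move=> Sx Sy; rewrite /quadf !(dotvC d) -dotvNl -dotvDl -mulNmx -mulmxDl.
by rewrite expr2 mulrA; apply: hess_lipschitz_dotv.
Qed.

Lemma second_difference (x h k : 'cV[R]_n) :
  (forall a b : R, 0 <= a <= 1 -> 0 <= b <= 1 -> S (x + a *: h + b *: k)) ->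
  `|f (x + h + k) - f (x + h) - f (x + k) + f x - dotv (hess x *m h) k| <=
  LH * (enorm h ^+ 2 * enorm k / 2 + enorm h * enorm k ^+ 2 / 2 +
        enorm k ^+ 3 / 3).
Proof.
move=> Srect; have i0 : 0 <= (0 : R) <= 1 by rewrite lexx ler01.
have i1 : 0 <= (1 : R) <= 1 by rewrite lexx ler01.
have seg_xh_k : segment_in S (x + h) k.
  by move=> t /(Srect 1 t i1); rewrite scale1r.
have seg_x_k : segment_in S x k.
  by move=> t /(Srect 0 t i0); rewrite scale0r addr0.
have seg_x_h : segment_in S x h.
  by move=> t /(Srect t 0)/(_ i0); rewrite scale0r addr0.
have Sx : S x by have := seg_x_k 0 i0; rewrite scale0r addr0.
have Sxh : S (x + h) by have := seg_xh_k 0 i0; rewrite scale0r addr0.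
have := taylor_segment seg_xh_k; have := taylor_segment seg_x_k.
have := grad_segment k seg_x_h; have := quadf_lipschitz k Sxh Sx.
rewrite addrAC subrr add0r !ler_norml.
move=> /andP[? ?] /andP[? ?] /andP[? ?] /andP[? ?].
by apply/andP; split; lra.
Qed.

(* Symmetry is not part of [C2_Lipschitz_on]: the second differences for
   (t u, t v) and (t v, t u) coincide, so [second_difference] bounds
   t^2 |u.Hv - v.Hu| by t^3 C. *)
Lemma hess_self_adjoint (x : 'cV[R]_n) : S x -> self_adjoint (hess x).
Proof.
move=> Sx u v.
have [open_S _ _ _ _] := C2.
have /nbhs_ballP[e e_gt0 ballS] : nbhs x S by apply: open_nbhs_nbhs.
pose B a b := LH * (a ^+ 2 * b / 2 + a * b ^+ 2 / 2 + b ^+ 3 / 3).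
pose C := B (enorm u) (enorm v) + B (enorm v) (enorm u).
have uv1_gt0 : 0 < `|u| + `|v| + 1 by rewrite ltr_wpDl ?addr_ge0.
apply/eqP; rewrite -subr_eq0; apply/eqP.
apply: (@eq0_of_small_bound _ _ C (e / (`|u| + `|v| + 1))) => [|t t_gt0 t_lt].
  exact: divr_gt0.
have Srect a b : 0 <= a <= 1 -> 0 <= b <= 1 ->
    S (x + a *: (t *: u) + b *: (t *: v)).
  move=> /andP[a_ge0 a_le1] /andP[b_ge0 b_le1]; apply: ballS.
  rewrite -ball_normE /ball_ /= -addrA opprD addrA subrr add0r normrN.
  apply: le_lt_trans (ler_normD _ _) _.
  rewrite !normrZ !ger0_norm ?(ltW t_gt0) //.
  have : t * (`|u| + `|v| + 1) < e by rewrite -ltr_pdivlMr.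
  have := mulr_ge0 (ltW t_gt0) (normr_ge0 u).
  have := mulr_ge0 (ltW t_gt0) (normr_ge0 v); nra.
have D1 := second_difference Srect.
have D2 := @second_difference x (t *: v) (t *: u).
rewrite (addrAC x (t *: v)) in D2.
move: D1 {D2}(D2 (fun a b ha hb => ltac:(rewrite addrAC; exact: Srect))).
rewrite !enormZ (ger0_norm (ltW t_gt0)) -!scalemxAr !(dotvZl, dotvZr).
rewrite !(dotvC (hess x *m _)) !ler_norml => /andP[? ?] /andP[? ?].
have key : `|(dotv u (hess x *m v) - dotv v (hess x *m u)) * t ^+ 2| <=
    t * C * t ^+ 2.
  by rewrite ler_norml /C /B; apply/andP; split; lra.
move: key; rewrite normrM (ger0_norm (sqr_ge0 t)).
by rewrite (ler_pM2r (exprn_gt0 2 t_gt0)) ler_norml.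
Qed.

End LipschitzHessian.

Lemma failed_ratio_long (R : realFieldType) (ared pred L e eta ns : R) :
  0 < L -> 0 < e -> eta < 1 -> 0 < ns ->
  e / 4 * ns ^+ 2 <= pred -> pred - ared <= L * ns ^+ 3 / 6 ->
  ared / pred < eta ->
  3 * (1 - eta) * e / (2 * L) < ns.
Proof.
move=> L_gt0 e_gt0 eta_lt1 ns_gt0 pred_ge taylor.
have pred_gt0 : 0 < pred.
  by apply: lt_le_trans pred_ge; rewrite !mulr_gt0 // exprn_gt0.
rewrite ltr_pdivrMr // ltr_pdivrMr ?mulr_gt0 // => ared_lt.
have decrease : (1 - eta) * (e / 4 * ns ^+ 2) <= (1 - eta) * pred.
  by rewrite ler_wpM2l // subr_ge0 ltW.
have ns2_gt0 : 0 < ns ^+ 2 by rewrite exprn_gt0.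
have : ns ^+ 2 * (3 * (1 - eta) * e) < ns ^+ 2 * (ns * (2 * L)) by lra.
by rewrite ltr_pM2l.
Qed.

Section Run.
Variables (R : realType) (n : nat).
Variables (f : 'cV[R]_n -> R) (grad : 'cV[R]_n -> 'cV[R]_n).
Variable hess : 'cV[R]_n -> 'M[R]_n.
Variables (eps_g eps_H gamma1 gamma2 psi delta0 delta_max eta zeta : R).
Variables (capCG : bool) (M : R) (D : run_data R n).
Hypotheses (eps_g_gt0 : 0 < eps_g) (eps_H_gt0 : 0 < eps_H) (zeta_ge0 : 0 <= zeta).

Local Notation spec := (iteration_spec f grad hess eps_g eps_H gamma1 gamma2 psi
  delta_max eta zeta capCG M D).
Local Notation x k := (rx D k).
Local Notation s k := (rs D k).

Lemma step_decrease k : spec k -> ~~ terminates grad eps_g D k ->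
  0 < rdelta D k -> self_adjoint (hess (x k)) ->
  [/\ enorm (s k) <= rdelta D k, s k != 0 &
      eps_H / 4 * enorm (s k) ^+ 2 <= - qmodel (grad (x k)) (hess (x k)) (s k)].
Proof.
move=> [CG_out CG_zero CG_step MEO_step _] not_term delta_gt0 symH.
have [useCG|MEO] := boolP (use_CG grad eps_g D k).
  have g_neq0 : grad (x k) != 0.
    apply: contraTneq useCG => g0; have [_ out] := CG_zero g0.
    by rewrite /use_CG out /= andbT g0 enorm0 ltNge (ltW eps_g_gt0).
  have not_max : routCG D k <> INT_MAX.
    by move=> out; move: useCG; rewrite /use_CG out /= andbF.
  have [] := trunc_CG_decrease g_neq0 symH eps_H_gt0 delta_gt0 zeta_ge0
    (CG_out g_neq0) not_max.
  rewrite -CG_step // => s_le s_neq0 dec; split=> //.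
  by have := mulr_ge0 (ltW eps_H_gt0) (sqr_ge0 (enorm (s k))); lra.
have [+ sE] := MEO_step MEO; move: not_term sE; rewrite /terminates MEO /=.
case: (rmeo D k) => // s0 _ /(_ s0 erefl) -> [v [_ _ _ gs0 [qs0 ns0]]].
split; [by rewrite ns0 | by rewrite -enorm_eq0 ns0 gt_eqF |].
by rewrite /qmodel; lra.
Qed.

Variables (S : set 'cV[R]_n) (L_g L_H : R).
Hypothesis C2 : C2_Lipschitz_on S f grad hess L_g L_H.
Hypothesis spec_reached : forall k, reached grad eps_g D k -> spec k.
Hypothesis segment_K : forall k, in_K grad eps_g D k -> segment_in S (x k) (s k).
Hypotheses (eta_lt1 : eta < 1) (L_H_gt0 : 0 < L_H).

Lemma in_K_step_decrease k : in_K grad eps_g D k -> 0 < rdelta D k ->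
  [/\ enorm (s k) <= rdelta D k, s k != 0 &
      eps_H / 4 * enorm (s k) ^+ 2 <= - qmodel (grad (x k)) (hess (x k)) (s k)].
Proof.
move=> /[dup] [[reach not_term]] /segment_K seg delta_gt0.
have symH := hess_self_adjoint C2 (segment_in_start seg).
exact: step_decrease (spec_reached reach) not_term delta_gt0 symH.
Qed.

Lemma unsuccessful_step_long k : in_K grad eps_g D k -> 0 < rdelta D k ->
  rho f grad hess D k < eta -> 3 * (1 - eta) * eps_H / (2 * L_H) < enorm (s k).
Proof.
move=> /[dup] inK /segment_K seg delta_gt0.
have [_ s_neq0 dec] := in_K_step_decrease inK delta_gt0.
rewrite /rho model_decreaseE; apply: failed_ratio_long dec _ => //.
  by rewrite lt_def enorm_eq0 s_neq0 enorm_ge0.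
by have := le_trans (ler_norm _) (taylor_segment C2 seg); rewrite /qmodel; lra.
Qed.

Hypotheses (gamma1_gt0 : 0 < gamma1) (gamma2_ge1 : 1 <= gamma2).
Hypotheses (delta0_gt0 : 0 < delta0) (delta0_le_max : delta0 <= delta_max).
Hypothesis delta_init : rdelta D 0 = delta0.

Local Notation delta_min :=
  (Num.min delta0 (3 * gamma1 * (1 - eta) / (2 * L_H) * eps_H)).

Lemma delta_min_gt0 : 0 < delta_min.
Proof. by rewrite lt_min delta0_gt0 !(mulr_gt0, invr_gt0) // subr_gt0. Qed.

Lemma radius_lower_bound k : reached grad eps_g D k -> delta_min <= rdelta D k.
Proof.
elim: k => [_|k IH reach1]; first by rewrite delta_init ge_min lexx.
have reach : reached grad eps_g D k by move=> j jk; apply: reach1; apply: leqW.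
have not_term := reach1 k (ltnSn k).
have dmin_le := IH reach; have delta_gt0 := lt_le_trans delta_min_gt0 dmin_le.
have [_ _ _ _ /(_ not_term)[success failure]] := spec_reached reach.
case: (leP eta (rho f grad hess D k)) => [/success|/[dup] rho_lt /failure] [_ ->].
  case: ifP => _ //; rewrite le_min; apply/andP; split.
    by apply: le_trans dmin_le _; rewrite ler_peMl // ltW.
  by apply: le_trans delta0_le_max; rewrite ge_min lexx.
have long := unsuccessful_step_long (conj reach not_term) delta_gt0 rho_lt.
apply: le_trans (ler_wpM2l (ltW gamma1_gt0) (ltW long)).
have -> : gamma1 * (3 * (1 - eta) * eps_H / (2 * L_H)) =
    3 * gamma1 * (1 - eta) / (2 * L_H) * eps_H.
  by rewrite mulrA; field; rewrite gt_eqF.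
by rewrite ge_min lexx orbT.
Qed.

Lemma trust_radius_bounds :
  (forall k, in_U f grad hess eps_g eta D k ->
     3 * (1 - eta) * eps_H / (2 * L_H) < rdelta D k) /\
  (0 < delta_min /\ forall k, in_K grad eps_g D k -> delta_min <= rdelta D k).
Proof.
split=> [k [inK rho_lt]|].
  have delta_gt0 := lt_le_trans delta_min_gt0 (radius_lower_bound inK.1).
  have [s_le _ _] := in_K_step_decrease inK delta_gt0.
  exact: lt_le_trans (unsuccessful_step_long inK delta_gt0 rho_lt) s_le.
by split=> [|k [/radius_lower_bound]]; [exact: delta_min_gt0|].
Qed.

End Run.

Theorem lemma4p2 (R : realType) (n : nat)
  (f : 'cV[R]_n -> R) (grad : 'cV[R]_n -> 'cV[R]_n) (hess : 'cV[R]_n -> 'M[R]_n)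
  (eps_g eps_H gamma1 gamma2 psi : R) (x0 : 'cV[R]_n)
  (delta0 delta_max eta zeta xi : R) (capCG : bool) (M L_g L_H : R)
  (D : run_data R n) :
  0 < eps_g -> 0 < eps_H ->
  0 < gamma1 < 1 -> 1 <= gamma2 -> gamma2^-1 < psi <= 1 ->
  0 < delta0 -> delta0 <= delta_max -> 0 < eta < 1 -> 0 < zeta < 1 ->
  0 <= xi < 1 -> 0 < L_g -> 0 < L_H -> L_g <= M ->
  algo4_run f grad hess eps_g eps_H gamma1 gamma2 psi delta0 delta_max eta zeta
    capCG M D x0 ->
  (* standing assumption *)
  (exists f_low : R, forall k, reached grad eps_g D k -> f_low <= f (rx D k)) ->
  (exists S : set 'cV[R]_n,
     C2_Lipschitz_on S f grad hess L_g L_H /\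
     forall k, in_K grad eps_g D k ->
       forall t : R, 0 <= t <= 1 -> S (rx D k + t *: rs D k)) ->
  (forall k, in_U f grad hess eps_g eta D k ->
     3 * (1 - eta) * eps_H / (2 * L_H) < rdelta D k) /\
  (let delta_min := Num.min delta0 (3 * gamma1 * (1 - eta) / (2 * L_H) * eps_H) in
   0 < delta_min /\ forall k, in_K grad eps_g D k -> delta_min <= rdelta D k).
Proof.
move=> eps_g_gt0 eps_H_gt0 /andP[gamma1_gt0 _] gamma2_ge1 _ delta0_gt0 delta0_le
  /andP[_ eta_lt1] /andP[zeta_gt0 _] _ _ L_H_gt0 _ [_ delta_init spec] _
  [S [C2 segment_K]].
exact: (trust_radius_bounds eps_g_gt0 eps_H_gt0 (ltW zeta_gt0) C2 spec segment_K
  eta_lt1 L_H_gt0 gamma1_gt0 gamma2_ge1 delta0_gt0 delta0_le delta_init).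
Qed.
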